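(* Let $F$ be an algebraically closed field, $l>1$ an integer coprime to the characteristic of $F$, $\xi\in F$ a primitive $l$-th root of $1$, $m\ge1$, and $$Clg(l,m)=\langle x_1,\ldots,x_m \mid x_i^l=1;\ x_i^{-1}x_jx_i=\xi x_j \ (i<j);\ x_i^{-1}x_jx_i=\xi^{-1}x_j \ (i>j)\rangle.$$ Then $Clg(l,m)$ has no proper nonzero two-sided ideals that are invariant under all automorphisms of $Clg(l,m)$. *)

From HB Require Import structures.
From mathcomp Require Import all_boot all_order all_algebra.
Set Implicit Arguments. Unset Strict Implicit. Unset Printing Implicit Defensive.
Import Order.TTheory GRing.Theory Num.Theory.
Local Open Scope ring_scope.

(* Defining relations of Clg(l,m) for a family x : 'I_m -> A in an F-algebra A.
   x_i^{-1} x_j x_i = xi x_j  (i<j)  is written  x_j x_i = xi (x_i x_j);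
   x_i^{-1} x_j x_i = xi^-1 x_j (i>j) is written x_j x_i = xi^-1 (x_i x_j)
   (equivalent since x_i is invertible, x_i^l = 1). *)
Definition clg_rels (F : fieldType) (A : algType F) (l : nat) (xi : F)
    (m : nat) (x : 'I_m -> A) : Prop :=
  [/\ forall i, x i ^+ l = 1,
      forall i j : 'I_m, (i < j)%N -> x j * x i = xi *: (x i * x j)
    & forall i j : 'I_m, (j < i)%N -> x j * x i = xi^-1 *: (x i * x j)].

Definition is_clg (F : fieldType) (A : algType F) (l : nat) (xi : F)
    (m : nat) (x : 'I_m -> A) : Prop :=
  clg_rels l xi x /\
  forall (B : algType F) (y : 'I_m -> B), clg_rels l xi y ->
    exists f : {lrmorphism A -> B},
      (forall i, f (x i) = y i) /\
      forall g : {lrmorphism A -> B}, (forall i, g (x i) = y i) -> g =1 f.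

Definition two_sided_ideal (R : nzRingType) (I : R -> Prop) : Prop :=
  [/\ I 0, (forall a b, I a -> I b -> I (a - b)),
      (forall r a, I a -> I (r * a)) & (forall r a, I a -> I (a * r))].

Definition is_alg_aut (F : fieldType) (A : algType F)
    (f : {lrmorphism A -> A}) : Prop := bijective f.

Definition aut_invariant (F : fieldType) (A : algType F) (I : A -> Prop) : Prop :=
  forall f : {lrmorphism A -> A}, is_alg_aut f -> forall a, I a -> I (f a).

From HB Require Import structures.
From mathcomp Require Import all_boot all_order all_algebra.
From mathcomp Require Import boolp.
Set Implicit Arguments. Unset Strict Implicit. Unset Printing Implicit Defensive.
Import GRing.Theory.
Local Open Scope ring_scope.

(** The algebra is spanned by the monomials in the generators, and a monomial
  in which every generator occurs a multiple of [l] times is a nonzero scalar;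
  hence every monomial is invertible up to a nonzero scalar. For every
  [f : 'I_m -> 'I_l] the substitution [x_i |-> xi^(f i) x_i] extends to an
  automorphism [S_f], which scales each monomial by a character of the torus
  [(Z/l)^m]; by orthogonality of characters, [sum_f S_f a] is a scalar for
  every [a]. Now let [a] be a nonzero element of an invariant ideal [I];
  multiplying by an inverse of its first monomial, we may assume that monomial
  is [1]. If some [S_f] moves [a], then [S_f a - a] is a nonzero element of [I]
  with one term fewer. Otherwise [l^m a = sum_f S_f a] is a scalar, nonzero
  because [l] is invertible in [F], so [1] lies in [I]. *)

Lemma expf_eq1_neq0 (R : idomainType) (z : R) n :
  (0 < n)%N -> z ^+ n = 1 -> z != 0.
Proof.
by move=> n_gt0 zn; have := expf_eq0 z n; rewrite zn oner_eq0 n_gt0 => /esym/negbT.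
Qed.

Lemma sum_expr_root1 (R : idomainType) (z : R) n :
  z ^+ n = 1 -> z != 1 -> \sum_(k < n) z ^+ k = 0.
Proof.
case: n => [|n] zn z_neq1; first by rewrite big_ord0.
by have := expfS_eq1 z n; rewrite zn eqxx (negbTE z_neq1) => /esym/eqP.
Qed.

Lemma scaled_commute_exp (F : fieldType) (A : algType F) (a b : A) (c : F) n :
  b * a = c *: (a * b) -> b * a ^+ n = c ^+ n *: (a ^+ n * b).
Proof.
move=> ba; elim: n => [|n IHn]; first by rewrite !expr0 mulr1 mul1r scale1r.
rewrite exprSr mulrA IHn -scalerAl -[_ * b * a]mulrA ba -scalerAr scalerA.
by rewrite mulrA -!exprSr.
Qed.

Lemma count_mem_filter_neq (T : eqType) (s : seq T) i j :
  count_mem j [seq k <- s | k != i] = if j == i then 0%N else count_mem j s.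
Proof.
rewrite count_filter; case: eqVneq => [->|j_neq_i].
  by rewrite -(count_pred0 s); apply: eq_count => k /=; rewrite andbN.
by apply: eq_count => k /=; case: eqVneq => // ->; rewrite j_neq_i.
Qed.

Section Monomials.
Variables (F : fieldType) (A : algType F) (m : nat) (x : 'I_m -> A).

Definition monomial (s : seq 'I_m) : A := \prod_(j <- s) x j.

Definition lincomb (r : seq (F * seq 'I_m)) : A :=
  \sum_(p <- r) p.1 *: monomial p.2.

Lemma monomial_cat s t : monomial (s ++ t) = monomial s * monomial t.
Proof. exact: big_cat. Qed.

Lemma lincomb_cons p r : lincomb (p :: r) = p.1 *: monomial p.2 + lincomb r.
Proof. exact: big_cons. Qed.

Lemma lincomb_mul_monomial r t :
  lincomb r * monomial t = lincomb [seq (p.1, p.2 ++ t) | p <- r].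
Proof.
rewrite /lincomb big_map mulr_suml; apply: eq_bigr => p _.
by rewrite -scalerAl monomial_cat.
Qed.

Lemma diag_rmorph_monomial (g : {rmorphism A -> A}) (w : 'I_m -> F) :
    (forall i, g (x i) = w i *: x i) ->
  forall t, g (monomial t) = (\prod_(j <- t) w j) *: monomial t.
Proof.
move=> g_x; elim=> [|j t IHt]; first by rewrite /monomial !big_nil rmorph1 scale1r.
rewrite /monomial !big_cons rmorphM g_x IHt -scalerAl -scalerAr scalerA.
by rewrite mulrC.
Qed.

Definition spanned : pred A := fun a => `[< exists r, a = lincomb r >].

Lemma spannedP a : reflect (exists r, a = lincomb r) (spanned a).
Proof. exact: asboolP. Qed.

Lemma spanned_subalg_closed : GRing.subsemialg_closed spanned.
Proof.
split.
- apply/spannedP; exists [:: (1, [::])].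
  by rewrite /lincomb big_seq1 /monomial big_nil scale1r.
- split; first by apply/spannedP; exists [::]; rewrite /lincomb big_nil.
  move=> _ _ /spannedP[r ->] /spannedP[r' ->]; apply/spannedP.
  by exists (r ++ r'); rewrite /lincomb big_cat.
- move=> c _ /spannedP[r ->]; apply/spannedP.
  exists [seq (c * p.1, p.2) | p <- r].
  by rewrite /lincomb big_map scaler_sumr; apply: eq_bigr => p _; rewrite scalerA.
- move=> _ _ /spannedP[r ->] /spannedP[r' ->]; apply/spannedP.
  exists [seq (p.1 * q.1, p.2 ++ q.2) | p <- r, q <- r'].
  rewrite /lincomb big_allpairs_dep mulr_suml; apply: eq_bigr => p _.
  rewrite mulr_sumr; apply: eq_bigr => q _.
  by rewrite monomial_cat -scalerAl -scalerAr scalerA.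
Qed.

Record span_subalg := SpanSubalg { span_val :> A; _ : spanned span_val }.
HB.instance Definition _ := [isSub for span_val].
HB.instance Definition _ := [Choice of span_subalg by <:].
HB.instance Definition _ :=
  GRing.SubChoice_isSubAlgebra.Build F A spanned span_subalg spanned_subalg_closed.

Lemma spanned_gen i : spanned (x i).
Proof.
apply/spannedP; exists [:: (1, [:: i])].
by rewrite /lincomb big_seq1 /monomial big_seq1 scale1r.
Qed.

HB.instance Definition _ := GRing.RMorphism.copy span_val val.
HB.instance Definition _ := GRing.Linear.copy span_val val.

Definition span_gen i : span_subalg := SpanSubalg (spanned_gen i).

End Monomials.

Arguments span_val {F A m x}.

Section Relations.
Variables (F : fieldType) (A : algType F) (l : nat) (xi : F) (m : nat).
Variable x : 'I_m -> A.
Hypothesis xi_prim : l.-primitive_root xi.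
Hypothesis rels : clg_rels l xi x.

Lemma clg_rels_scale (w : 'I_m -> F) :
  (forall i, w i ^+ l = 1) -> clg_rels l xi (fun i => w i *: x i).
Proof.
move=> w_l; case: rels => x_l x_lt x_gt; split.
- by move=> i; rewrite exprZn w_l x_l scale1r.
- move=> i j ij; rewrite -!scalerAl -!scalerAr !scalerA x_lt // !scalerA.
  by rewrite mulrC mulrA mulrAC.
- move=> i j ji; rewrite -!scalerAl -!scalerAr !scalerA x_gt // !scalerA.
  by rewrite mulrC mulrA mulrAC.
Qed.

Lemma gen_commute i j : exists2 c : F, c != 0 & x j * x i = c *: (x i * x j).
Proof.
have xi_neq0 : xi != 0.
  exact: expf_eq1_neq0 (prim_order_gt0 xi_prim) (prim_expr_order xi_prim).
case: rels => _ x_lt x_gt; case: (ltngtP i j) => [ij | ji | /val_inj ->].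
- by exists xi; last exact: x_lt.
- by exists xi^-1; [rewrite invr_eq0 | exact: x_gt].
- by exists 1; rewrite ?oner_eq0 ?scale1r.
Qed.

Lemma monomial_pull i s : exists2 c : F, c != 0 &
  monomial x s = c *: (x i ^+ count_mem i s * monomial x [seq j <- s | j != i]).
Proof.
elim: s => [|j s [c c_neq0 IHs]].
  by exists 1; rewrite ?oner_eq0 // /monomial big_nil expr0 mulr1 scale1r.
rewrite /monomial big_cons -/(monomial x s) IHs /=.
case: eqVneq => [->|j_neq_i].
  by exists c; rewrite // -scalerAr mulrA -exprS add1n.
have [d d_neq0 xij] := gen_commute i j.
exists (c * d ^+ count_mem i s); first by rewrite mulf_neq0 ?expf_neq0.
rewrite /monomial big_cons -/(monomial x _) add0n -scalerAr !mulrA.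
by rewrite (scaled_commute_exp _ xij) -scalerAl scalerA.
Qed.

Lemma monomial_scalar s : (forall i, l %| count_mem i s)%N ->
  exists2 c : F, c != 0 & monomial x s = c%:A.
Proof.
have [n] := ubnP (size s); elim: n s => // n IHn [|i s] size_s dvd_s.
  by exists 1; rewrite ?oner_eq0 // /monomial big_nil scale1r.
have [c c_neq0 ->] := monomial_pull i (i :: s).
have [d d_neq0 ->] : exists2 d : F, d != 0 &
    monomial x [seq j <- i :: s | j != i] = d%:A.
  apply: IHn => [|j]; last first.
    by rewrite count_mem_filter_neq; case: eqP => // _; rewrite dvdn0.
  by rewrite /= eqxx size_filter (leq_ltn_trans (count_size _ _)).
case: rels => x_l _ _; have [k ->] := dvdnP (dvd_s i).
rewrite mulnC exprM x_l expr1n mul1r scalerA.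
by exists (c * d); rewrite ?mulf_neq0.
Qed.

Lemma monomial_inverse s : exists t,
  (exists2 c : F, c != 0 & monomial x (s ++ t) = c%:A) /\
  (exists2 c : F, c != 0 & monomial x (t ++ s) = c%:A).
Proof.
pose t := flatten (nseq l.-1 s).
have dvd_count i : (l %| count_mem i s + count_mem i t)%N.
  rewrite count_flatten map_nseq sumn_nseq -{1}[count_mem i s]muln1 -mulnDr.
  by rewrite add1n prednK ?dvdn_mull // (prim_order_gt0 xi_prim).
by exists t; split; apply: monomial_scalar => i; rewrite count_cat // addnC.
Qed.

End Relations.

Section Presentation.
Variables (F : fieldType) (A : algType F) (l : nat) (xi : F) (m : nat).
Variable x : 'I_m -> A.
Hypothesis clg : is_clg l xi x.

Lemma clg_lift (B : algType F) (y : 'I_m -> B) : clg_rels l xi y ->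
  exists f : {lrmorphism A -> B}, forall i, f (x i) = y i.
Proof. by case/(clg.2 B) => f [f_x _]; exists f. Qed.

Lemma clg_endo_id (g : {lrmorphism A -> A}) : (forall i, g (x i) = x i) -> g =1 id.
Proof.
move=> g_x a; have [f [_ f_unique]] := clg.2 A x clg.1.
by rewrite (f_unique g g_x) -(f_unique idfun (fun=> erefl)).
Qed.

Lemma clg_spanning a : exists r, a = lincomb x r.
Proof.
have [x_l x_lt x_gt] := clg.1.
have span_rels : clg_rels l xi (span_gen x).
  split=> [i | i j ij | i j ji]; apply: val_inj.
  - by rewrite rmorphXn rmorph1 /= x_l.
  - by rewrite linearZ !rmorphM /= x_lt.
  - by rewrite linearZ !rmorphM /= x_gt.
have [f f_x] := clg_lift span_rels.
have val_f : span_val \o f =1 id by apply: clg_endo_id => i /=; rewrite f_x.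
by rewrite -(val_f a) /=; apply/spannedP; case: (f a).
Qed.

Lemma torus_aut (w : 'I_m -> F) : (0 < l)%N -> (forall i, w i ^+ l = 1) ->
  exists s : {lrmorphism A -> A}, is_alg_aut s /\ forall i, s (x i) = w i *: x i.
Proof.
move=> l_gt0 w_l; have w_neq0 i : w i != 0 := expf_eq1_neq0 l_gt0 (w_l i).
have winv_l i : (w i)^-1 ^+ l = 1 by rewrite exprVn w_l invr1.
have [s s_x] := clg_lift (clg_rels_scale clg.1 w_l).
have [t t_x] := clg_lift (clg_rels_scale clg.1 winv_l).
exists s; split=> //; exists t.
- apply: (@clg_endo_id (t \o s)) => i /=.
  by rewrite s_x linearZ /= t_x scalerA mulfV ?scale1r.
- apply: (@clg_endo_id (s \o t)) => i /=.
  by rewrite t_x linearZ /= s_x scalerA mulVf ?scale1r.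
Qed.

End Presentation.

Section TorusCharacters.
Variables (F : fieldType) (l : nat) (xi : F) (m : nat).
Hypothesis xi_prim : l.-primitive_root xi.

Lemma prim_root_expr_order k : (xi ^+ k) ^+ l = 1.
Proof. by rewrite exprAC (prim_expr_order xi_prim) expr1n. Qed.

Definition torus_char (f : {ffun 'I_m -> 'I_l}) (t : seq 'I_m) : F :=
  \prod_(j <- t) xi ^+ f j.

Lemma torus_char_count f t :
  torus_char f t = \prod_(i < m) (xi ^+ count_mem i t) ^+ f i.
Proof.
rewrite /torus_char; elim: t => [|j t IHt].
  by rewrite big_nil big1 // => i _; rewrite expr1n.
under [RHS]eq_bigr => i _ do rewrite /= exprD exprMn.
rewrite big_cons big_split IHt /=; congr (_ * _).
rewrite (bigD1 j) //= eqxx expr1 big1 ?mulr1 // => i i_neq_j.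
by rewrite eq_sym (negbTE i_neq_j) expr0 expr1n.
Qed.

Lemma sum_torus_char t : \sum_f torus_char f t =
  if [forall i, l %| count_mem i t]%N then l%:R ^+ m else 0.
Proof.
under eq_bigr do rewrite torus_char_count.
rewrite -(bigA_distr_bigA (fun i (k : 'I_l) => (xi ^+ count_mem i t) ^+ k)).
case: ifPn => [/forallP dvd_t | /forallPn[i0 ndvd_i0]].
  rewrite -[m in RHS]card_ord -prodr_const; apply: eq_bigr => i _.
  have -> : xi ^+ count_mem i t = 1 by apply/eqP; rewrite -(prim_order_dvd xi_prim).
  by under eq_bigr do rewrite expr1n; rewrite sumr_const card_ord.
rewrite (bigD1 i0) //= sum_expr_root1 ?mul0r ?prim_root_expr_order //.
by rewrite -(prim_order_dvd xi_prim).
Qed.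

End TorusCharacters.

Section InvariantIdeal.
Variables (F : fieldType) (A : algType F) (l : nat) (xi : F) (m : nat).
Variable x : 'I_m -> A.
Hypothesis xi_prim : l.-primitive_root xi.
Hypothesis rels : clg_rels l xi x.
Variable S : {ffun 'I_m -> 'I_l} -> {lrmorphism A -> A}.
Hypothesis S_aut : forall f, is_alg_aut (S f).
Hypothesis S_gen : forall f i, S f (x i) = xi ^+ f i *: x i.
Variable I : A -> Prop.
Hypothesis I_ideal : two_sided_ideal I.
Hypothesis I_inv : aut_invariant I.

Lemma torus_monomial f t : S f (monomial x t) = torus_char xi f t *: monomial x t.
Proof. exact: diag_rmorph_monomial (S_gen f) t. Qed.

Lemma torus_sum_monomial t : exists e : F, \sum_f S f (monomial x t) = e%:A.
Proof.
under eq_bigr do rewrite torus_monomial.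
rewrite -scaler_suml sum_torus_char //; case: ifP => [/forallP dvd_t | _].
  have [c _ ->] := monomial_scalar xi_prim rels dvd_t.
  by exists (l%:R ^+ m * c); rewrite scalerA.
by exists 0; rewrite !scale0r.
Qed.

Lemma torus_sum_lincomb r : exists e : F, \sum_f S f (lincomb x r) = e%:A.
Proof.
elim: r => [|[c t] r [e IHr]].
  by exists 0; rewrite scale0r big1 // => f _; rewrite /lincomb big_nil raddf0.
have [d sum_t] := torus_sum_monomial t.
exists (c * d + e); under eq_bigr do rewrite lincomb_cons raddfD /= linearZ.
by rewrite big_split -scaler_sumr /= sum_t IHr scalerDl scalerA.
Qed.

Lemma torus_sub_lincomb f r : S f (lincomb x r) - lincomb x r =
  lincomb x [seq (p.1 * (torus_char xi f p.2 - 1), p.2) | p <- r].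
Proof.
elim: r => [|p r IHr]; first by rewrite /lincomb !big_nil raddf0 subrr.
rewrite map_cons !lincomb_cons -IHr /= raddfD /= linearZ /= torus_monomial.
by rewrite scalerA mulrBr mulr1 scalerBl opprD addrACA.
Qed.

Lemma ideal_scale c a : I a -> I (c *: a).
Proof. by case: I_ideal => _ _ I_mull _ Ia; rewrite -mulr_algl; apply: I_mull. Qed.

Hypothesis l_neq0 : l%:R != 0 :> F.

Lemma ideal_one_of_fixed r : I (lincomb x r) -> lincomb x r != 0 ->
  (forall f, S f (lincomb x r) = lincomb x r) -> I 1.
Proof.
move=> Ia a_neq0 a_fixed; have [e] := torus_sum_lincomb r.
under eq_bigr do rewrite a_fixed.
rewrite sumr_const card_ffun !card_ord -scaler_nat natrX => sum_e.
have e_neq0 : e != 0.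
  apply: contra_neq a_neq0 => e0; apply/eqP; move: sum_e; rewrite e0 scale0r.
  by move/eqP; rewrite scaler_eq0 expf_eq0 (negbTE l_neq0) andbF.
have -> : 1 = (e^-1 * l%:R ^+ m) *: lincomb x r.
  by rewrite -scalerA sum_e scalerA mulVf ?scale1r.
exact: ideal_scale.
Qed.

Lemma ideal_one_of_lincomb r : I (lincomb x r) -> lincomb x r != 0 -> I 1.
Proof.
have [n] := ubnP (size r); elim: n r => // n IHn [|[c s] r] /= size_r Ia a_neq0.
  by rewrite /lincomb big_nil eqxx in a_neq0.
case: I_ideal => _ I_sub _ I_mulr.
have [t [[k k_neq0 st_k] [k' k'_neq0 ts_k']]] := monomial_inverse xi_prim rels s.
set a := lincomb x _ in Ia a_neq0; pose r' := [seq (p.1, p.2 ++ t) | p <- r].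
have a_t : a * monomial x t = lincomb x ((c * k, [::]) :: r').
  rewrite lincomb_mul_monomial map_cons !lincomb_cons /= st_k /monomial big_nil.
  by rewrite scalerA.
have at_neq0 : a * monomial x t != 0.
  apply: contraNneq a_neq0 => at0.
  have : a * monomial x t * monomial x s = k' *: a.
    by rewrite -mulrA -monomial_cat ts_k' mulr_algr.
  by rewrite at0 mul0r => /esym/eqP; rewrite scaler_eq0 (negbTE k'_neq0).
have I_at : I (a * monomial x t) by apply: I_mulr.
rewrite a_t in at_neq0 I_at; set b := lincomb x _ in at_neq0 I_at.
have [/forallP b_fixed | /forallPn[f b_moved]] := boolP [forall f, S f b == b].
  by apply: ideal_one_of_fixed I_at at_neq0 _ => f; apply/eqP.
have sub_f : S f b - b =
    lincomb x [seq (p.1 * (torus_char xi f p.2 - 1), p.2) | p <- r'].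
  rewrite torus_sub_lincomb map_cons lincomb_cons /= /torus_char big_nil.
  by rewrite subrr mulr0 scale0r add0r.
apply: (IHn [seq (p.1 * (torus_char xi f p.2 - 1), p.2) | p <- r']).
- by rewrite !size_map.
- by rewrite -sub_f; apply: I_sub (I_inv (S_aut f) I_at) I_at.
- by rewrite -sub_f subr_eq0.
Qed.

End InvariantIdeal.

Unset Implicit Arguments.
Theorem corollary1 (F : closedFieldType) (l : nat) (xi : F) (m : nat)
    (A : algType F) (x : 'I_m -> A) :
  (1 < l)%N ->
  (forall p : nat, p \in [pchar F] -> coprime p l) ->
  l.-primitive_root xi ->
  (1 <= m)%N ->
  is_clg l xi x ->
  forall I : A -> Prop,
    two_sided_ideal I -> aut_invariant I ->
    (forall a, I a -> a = 0) \/ (forall a, I a).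
Proof.
move=> _ _ xi_prim _ clg I I_ideal I_inv.
have torus (f : {ffun 'I_m -> 'I_l}) := torus_aut clg (prim_order_gt0 xi_prim)
  (fun i => prim_root_expr_order xi_prim (f i)).
have [S S_torus] := choice torus.
have S_aut f := (S_torus f).1; have S_gen f := (S_torus f).2.
case: (pselect (exists a, I a /\ a != 0)) => [[a [Ia a_neq0]] | I_zero]; [right | left].
  have [r a_r] := clg_spanning clg a; rewrite a_r in Ia a_neq0.
  have I_one := ideal_one_of_lincomb xi_prim clg.1 S_aut S_gen I_ideal I_inv
    (prim_root_natf_neq0 xi_prim) Ia a_neq0.
  by case: I_ideal => _ _ I_mull _ b; rewrite -[b]mulr1; apply: I_mull.
by move=> a Ia; apply: contra_notP I_zero => /eqP a_neq0; exists a.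
Qed.
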